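(* Let $R$ be a $*$-reducing ring and let $p,q\in R$ be projections. Then the following are equivalent: (1) $pq-qp$ is MP invertible; (2) $pq$ and $p-q$ are both MP invertible.
   Context: $R$ is an associative ring with identity $1$ and an involution $a\mapsto a^*$ (satisfying $(a^* )^*=a$, $(a+b)^*=a^*+b^*$, $(ab)^*=b^*a^*$). $R$ is $*$-reducing if $a^*a=0$ implies $a=0$ for all $a\in R$. An element $a$ is MP invertible if there is $b$ with $aba=a$, $bab=b$, $(ab)^*=ab$, $(ba)^*=ba$. A projection is an element $p$ with $p^2=p=p^*$. *)

From mathcomp Require Import all_boot all_algebra.
Set Implicit Arguments. Unset Strict Implicit. Unset Printing Implicit Defensive.
Import GRing.Theory.
Local Open Scope ring_scope.

Definition is_involution (R : pzRingType) (star : R -> R) : Prop :=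
  [/\ forall a, star (star a) = a,
      forall a b, star (a + b) = star a + star b
    & forall a b, star (a * b) = star b * star a].

Definition star_reducing (R : pzRingType) (star : R -> R) : Prop :=
  forall a : R, star a * a = 0 -> a = 0.

Definition MP_invertible (R : pzRingType) (star : R -> R) (a : R) : Prop :=
  exists b : R, [/\ a * b * a = a, b * a * b = b,
                    star (a * b) = a * b & star (b * a) = b * a].

Definition projection (R : pzRingType) (star : R -> R) (p : R) : Prop :=
  p * p = p /\ star p = p.

(* Write s = (p - q)^2, which commutes with q.  In a *-reducing ring, a is
   MP invertible iff a^* a has a group inverse, and a^* a equals s (1 - s),
   q (1 - s) and s for a = pq - qp, pq and p - q.  So it suffices to show that
   s (1 - s) is group invertible iff q (1 - s) and s are.  If x + y = 1 and xy
   is group invertible, so is x; this gives one direction.  Conversely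
   s . q (1 - s) = q s (1 - s) is group invertible; it is k^* k for
   k = (1 - q) pq, hence so is k k^* = (1 - q) s (1 - s), and the two corners
   of s (1 - s) cut out by q glue together. *)

From mathcomp Require Import all_boot all_algebra.
Set Implicit Arguments. Unset Strict Implicit. Unset Printing Implicit Defensive.
Import GRing.Theory.
Local Open Scope ring_scope.

Section GroupInverse.
Variable R : pzRingType.
Implicit Types a b h q w z : R.

Definition group_inverse a w := [/\ a * w = w * a, a * w * a = a & w * a * w = w].
Definition group_invertible a := exists w, group_inverse a w.

Lemma group_inverse_idem q : q * q = q -> group_inverse q q.
Proof. by move=> qq; split; rewrite ?qq. Qed.

Lemma group_inverse_mull a w : group_inverse a w -> w = a * (w * w).
Proof. by case=> aw _ whw; rewrite mulrA aw. Qed.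

Lemma group_inverse_mulr a w : group_inverse a w -> w = w * w * a.
Proof. by case=> aw _ whw; rewrite -mulrA -aw mulrA. Qed.

Lemma group_inverse_commute a w z :
  group_inverse a w -> z * a = a * z -> z * w = w * z.
Proof.
move=> gaw za; have [aw awa _] := gaw.
have wa_a : w * a * a = a by rewrite -aw.
have a_aw : a * (a * w) = a by rewrite aw mulrA.
have zw : z * w = a * z * (w * w) by rewrite {1}(group_inverse_mull gaw) mulrA za.
have wz : w * z = w * w * (z * a) by rewrite {1}(group_inverse_mulr gaw) -mulrA za.
transitivity (w * a * (z * w)); first by rewrite zw !mulrA wa_a.
transitivity (w * z * (a * w)); first by rewrite !mulrA -(mulrA w a) -za !mulrA.
by rewrite wz -!mulrA a_aw.
Qed.

Lemma group_inverse_uniq a w1 w2 :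
  group_inverse a w1 -> group_inverse a w2 -> w1 = w2.
Proof.
move=> g1 g2.
have [aw1 aw1a w1aw1] := g1; have [aw2 aw2a w2aw2] := g2.
have e12 : a * w1 = a * w1 * (a * w2).
  by rewrite aw1 -{1}aw2a [in RHS]aw2 !mulrA.
have e21 : a * w2 = a * w1 * (a * w2) by rewrite -{1}aw1a !mulrA.
have e : a * w1 = a * w2 by rewrite e12 -e21.
by rewrite -[LHS]w1aw1 -aw1 e aw2 -mulrA e mulrA w2aw2.
Qed.

Lemma group_inverseM a b w1 w2 : a * b = b * a ->
  group_inverse a w1 -> group_inverse b w2 -> group_inverse (a * b) (w1 * w2).
Proof.
move=> ab g1 g2.
have bw1 : b * w1 = w1 * b := group_inverse_commute g1 (esym ab).
have aw2 : a * w2 = w2 * a := group_inverse_commute g2 ab.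
have w2w1 : w2 * w1 = w1 * w2 := group_inverse_commute g1 (esym aw2).
have [aw1 aw1a w1aw1] := g1; have [bw2 bw2b w2bw2] := g2.
have shuffle x1 y1 x2 y2 : x2 * y2 * x1 = x1 * (x2 * y2) ->
    x1 * y1 * (x2 * y2) * (x1 * x2) = x1 * y1 * x1 * (x2 * y2 * x2).
  by move=> c; rewrite (mulrA _ x1 x2) -(mulrA (x1 * y1)) c !mulrA.
have E : a * b * (w1 * w2) = a * w1 * (b * w2).
  by rewrite -!mulrA (mulrA b) bw1 -mulrA.
have F : w1 * w2 * (a * b) = w1 * a * (w2 * b).
  by rewrite -!mulrA (mulrA w2) -aw2 -mulrA.
split.
- by rewrite E F aw1 bw2.
- by rewrite E shuffle ?aw1a ?bw2b // -mulrA -aw2 mulrA -ab -mulrA.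
- by rewrite F shuffle ?w1aw1 ?w2bw2 // -mulrA bw1 mulrA w2w1 -mulrA.
Qed.

Lemma group_invertibleM a b : a * b = b * a ->
  group_invertible a -> group_invertible b -> group_invertible (a * b).
Proof. by move=> ab [w1 g1] [w2 g2]; exists (w1 * w2); apply: group_inverseM. Qed.

Lemma group_inverse_annihilate_l a w x :
  group_inverse a w -> x * a = 0 -> x * w = 0.
Proof. by move=> g xa; rewrite (group_inverse_mull g) mulrA xa mul0r. Qed.

Lemma group_inverse_annihilate_r a w x :
  group_inverse a w -> a * x = 0 -> w * x = 0.
Proof. by move=> g ax; rewrite (group_inverse_mulr g) -mulrA ax mulr0. Qed.

Lemma group_inverseD a1 a2 w1 w2 :
    a1 * w2 = 0 -> w2 * a1 = 0 -> a2 * w1 = 0 -> w1 * a2 = 0 ->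
  group_inverse a1 w1 -> group_inverse a2 w2 -> group_inverse (a1 + a2) (w1 + w2).
Proof.
move=> a1w2 w2a1 a2w1 w1a2 [a1w1 a1w1a1 w1a1w1] [a2w2 a2w2a2 w2a2w2].
have E : (a1 + a2) * (w1 + w2) = a1 * w1 + a2 * w2.
  by rewrite mulrDl !mulrDr a1w2 a2w1 addr0 add0r.
have F : (w1 + w2) * (a1 + a2) = w1 * a1 + w2 * a2.
  by rewrite mulrDl !mulrDr w1a2 w2a1 addr0 add0r.
split.
- by rewrite E F a1w1 a2w2.
- rewrite E mulrDl !mulrDr -!mulrA w1a2 w2a1 !mulr0 addr0 add0r.
  by rewrite !mulrA a1w1a1 a2w2a2.
- rewrite F mulrDl !mulrDr -!mulrA a1w2 a2w1 !mulr0 addr0 add0r.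
  by rewrite !mulrA w1a1w1 w2a2w2.
Qed.

Lemma group_invertible_corners q h : q * q = q -> q * h = h * q ->
  group_invertible (q * h) -> group_invertible ((1 - q) * h) ->
  group_invertible h.
Proof.
move=> qq qh [w1 g1] [w2 g2]; exists (w1 + w2).
have q'q : (1 - q) * q = 0 by rewrite mulrBl mul1r qq subrr.
have qq' : q * (1 - q) = 0 by rewrite mulrBr mulr1 qq subrr.
have q'h : (1 - q) * h = h * (1 - q) by rewrite mulrBl mulrBr mul1r mulr1 qh.
rewrite (_ : h = q * h + (1 - q) * h); last by rewrite -mulrDl addrC subrK mul1r.
apply: (group_inverseD _ _ _ _ g1 g2).
- by rewrite qh -mulrA (group_inverse_annihilate_l g2) ?mulr0 // mulrA qq' mul0r.
- by rewrite mulrA (group_inverse_annihilate_r g2) ?mul0r // -mulrA -qh mulrA q'q mul0r.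
- by rewrite q'h -mulrA (group_inverse_annihilate_l g1) ?mulr0 // mulrA q'q mul0r.
- by rewrite mulrA (group_inverse_annihilate_r g1) ?mul0r // -mulrA -q'h mulrA qq' mul0r.
Qed.

Lemma group_inverse_mul_idem h w : group_inverse h w -> h * w * (h * w) = h * w.
Proof. by case=> _ hwh _; rewrite mulrA hwh. Qed.

Section Factor.
Variables a b w : R.
Hypotheses (ab : a * b = b * a) (g : group_inverse (a * b) w).

Lemma group_inverse_factor_commute : a * w = w * a.
Proof. by apply: (group_inverse_commute g); rewrite -[RHS]mulrA -ab. Qed.

Lemma group_inverse_factor_idem_commute : a * b * w * a = a * (a * b * w).
Proof.
have aw := group_inverse_factor_commute.
by rewrite -mulrA -aw mulrA -(mulrA a b a) -ab !mulrA.
Qed.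

Lemma group_inverse_factor : group_inverse (a * b * w * a) (b * w).
Proof.
have aw := group_inverse_factor_commute; have [_ _ wabw] := g.
set e := a * b * w.
have ee : e * e = e := group_inverse_mul_idem g.
have bwe : b * w * e = b * w by rewrite -mulrA (mulrA w) wabw.
have eabw : e * a * (b * w) = e by rewrite -mulrA (mulrA a) ee.
have bwea : b * w * (e * a) = e by rewrite mulrA bwe -mulrA -aw mulrA -ab.
split.
- by rewrite eabw bwea.
- by rewrite eabw mulrA ee.
- by rewrite -mulrA eabw bwe.
Qed.
End Factor.

(* Cut a along the idempotent e = (ab) w: on e it is inverted by b w, and off
   e it is idempotent because a (1 - a) = ab vanishes there. *)
Lemma group_invertible_mull_compl a b :
  a + b = 1 -> group_invertible (a * b) -> group_invertible a.
Proof.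
move=> ab1 [w g].
have a_eq : a = 1 - b by rewrite -ab1 addrK.
have ab : a * b = b * a by rewrite a_eq mulrBr mulrBl mulr1 mul1r.
have [_ abwab _] := g.
set e := a * b * w.
have ee : e * e = e := group_inverse_mul_idem g.
have ea : e * a = a * e := group_inverse_factor_idem_commute ab g.
apply: (group_invertible_corners ee ea).
  by exists (b * w); exact: group_inverse_factor.
exists ((1 - e) * a); apply: group_inverse_idem.
have e'a : (1 - e) * a = a * (1 - e) by rewrite mulrBl mulrBr mul1r mulr1 ea.
have e'e' : (1 - e) * (1 - e) = 1 - e.
  by rewrite mulrBr mulr1 mulrBl mul1r ee subrr subr0.
have aa : a * a = a - a * b by rewrite {2}a_eq mulrBr mulr1.
have e'ab : (1 - e) * (a * b) = 0 by rewrite mulrBl mul1r abwab subrr.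
by rewrite -mulrA (mulrA a) -e'a !mulrA e'e' -mulrA aa mulrBr e'ab subr0.
Qed.
End GroupInverse.

Section Idempotents.
Variable R : pzRingType.
Implicit Types e p q r x : R.

Lemma idem_compl e : e * e = e -> (1 - e) * (1 - e) = 1 - e.
Proof. by move=> ee; rewrite mulrBr mulr1 mulrBl mul1r ee subrr subr0. Qed.

Lemma idem_mul_sub_sqr e x : e * e = e -> e * x = x * e ->
  e * x - e * x * (e * x) = e * (x * (1 - x)).
Proof.
by move=> ee ex; rewrite -(mulrA e x) (mulrA x) -ex !mulrA ee mulrBr mulr1.
Qed.

Lemma idem_sandwich_compl p r : p * p = p -> r * r = r ->
  r * p * (1 - r) * p * r = r * p * r - r * p * r * (r * p * r).
Proof.
move=> pp rr; rewrite mulrBr mulr1 mulrBl mulrBl -(mulrA r p p) pp.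
by rewrite !mulrA -(mulrA (r * p) r r) rr.
Qed.

Section Corners.
Variables p q : R.
Hypotheses (pp : p * p = p) (qq : q * q = q).

Lemma mulr_compl_sqr_sub : (1 - q) * (p - q) ^+ 2 = (1 - q) * p * (1 - q).
Proof.
rewrite expr2 mulrA.
have -> : (1 - q) * (p - q) = (1 - q) * p.
  by rewrite mulrBr [(1 - q) * q]mulrBl mul1r qq subrr subr0.
by rewrite -!mulrA; congr (_ * _); rewrite !mulrBr pp mulr1.
Qed.

Lemma sqr_sub_mulr_compl : (p - q) ^+ 2 * (1 - q) = (1 - q) * p * (1 - q).
Proof.
rewrite expr2 -mulrA.
have -> : (p - q) * (1 - q) = p * (1 - q).
  by rewrite mulrBl [q * (1 - q)]mulrBr mulr1 qq subrr subr0.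
by rewrite mulrA; congr (_ * _); rewrite !mulrBl pp mul1r.
Qed.

Lemma sqr_sub_commute : q * (p - q) ^+ 2 = (p - q) ^+ 2 * q.
Proof.
have : (1 - q) * (p - q) ^+ 2 = (p - q) ^+ 2 * (1 - q).
  by rewrite mulr_compl_sqr_sub sqr_sub_mulr_compl.
by rewrite mulrBl mulrBr mul1r mulr1 => /addrI /oppr_inj.
Qed.

End Corners.

Section TwoIdempotents.
Variables p q : R.
Hypotheses (pp : p * p = p) (qq : q * q = q).

Let pp' : (1 - p) * (1 - p) = 1 - p := idem_compl pp.
Let qq' : (1 - q) * (1 - q) = 1 - q := idem_compl qq.

Lemma mulr_sqr_sub : q * (p - q) ^+ 2 = q * (1 - p) * q.
Proof.
have E : 1 - p - (1 - q) = - (p - q) by rewrite opprB addrC addrA subrK opprB.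
by have := mulr_compl_sqr_sub pp' qq'; rewrite E sqrrN subKr.
Qed.

Lemma mulr_sqr_sub_compl : q * (p - (1 - q)) ^+ 2 = q * p * q.
Proof. by have := mulr_compl_sqr_sub pp qq'; rewrite subKr. Qed.

Lemma mulr_compl_sqr_sub_compl :
  (1 - q) * (p - (1 - q)) ^+ 2 = (1 - q) * (1 - p) * (1 - q).
Proof.
have E : 1 - p - q = - (p - (1 - q)) by rewrite opprB addrAC.
by have := mulr_compl_sqr_sub pp' qq; rewrite E sqrrN.
Qed.

Lemma sqr_sub_compl : (p - (1 - q)) ^+ 2 = 1 - (p - q) ^+ 2.
Proof.
apply: (@addrI _ ((p - q) ^+ 2)); rewrite subrKC.
have corners x : x = q * x + (1 - q) * x by rewrite -mulrDl subrKC mul1r.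
rewrite [LHS]corners !mulrDr.
rewrite mulr_sqr_sub mulr_sqr_sub_compl (mulr_compl_sqr_sub pp qq).
rewrite mulr_compl_sqr_sub_compl -!mulrDl -!mulrDr.
by rewrite subrK subrKC !mulr1 qq qq' subrKC.
Qed.

(* With d = p - q and e = p + q - 1 = p - (1 - q): pq - qp = de = - ed and,
   by sqr_sub_compl, e^2 = 1 - d^2. *)
Lemma mul_sub_sub_compl : (p - q) * (p - (1 - q)) = p * q - q * p.
Proof.
have pe : p * (p - (1 - q)) = p * q by rewrite mulrBr pp mulrBr mulr1 subKr.
have qe : q * (p - (1 - q)) = q * p.
  by rewrite mulrBr [q * (1 - q)]mulrBr mulr1 qq subrr subr0.
by rewrite mulrBl pe qe.
Qed.

Lemma mul_sub_compl_sub : (p - (1 - q)) * (p - q) = q * p - p * q.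
Proof.
have ep : (p - (1 - q)) * p = q * p by rewrite mulrBl pp mulrBl mul1r subKr.
have eq' : (p - (1 - q)) * q = p * q.
  by rewrite mulrBl [(1 - q) * q]mulrBl mul1r qq subrr subr0.
by rewrite mulrBr ep eq'.
Qed.

Lemma commutator_sqr :
  (p * q - q * p) * (p * q - q * p) = - ((p - q) ^+ 2 * (p - (1 - q)) ^+ 2).
Proof.
rewrite -mul_sub_sub_compl -mulrA (mulrA (p - (1 - q))) mul_sub_compl_sub.
by rewrite -(opprB (p * q)) -mul_sub_sub_compl mulNr mulrN !expr2 !mulrA.
Qed.

End TwoIdempotents.
End Idempotents.

Section Involution.
Variables (R : pzRingType) (star : R -> R).
Hypothesis Hinv : is_involution star.
Implicit Types a h w x : R.

Lemma starK : involutive star. Proof. by case: Hinv. Qed.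
Lemma starD : {morph star : x y / x + y}. Proof. by case: Hinv. Qed.
Lemma starM x y : star (x * y) = star y * star x. Proof. by case: Hinv. Qed.
Lemma star0 : star 0 = 0.
Proof. by apply: (@addrI _ (star 0)); rewrite -starD !addr0. Qed.
Lemma starB : {morph star : x y / x - y}.
Proof.
move=> x y; rewrite starD; congr (_ + _).
by apply: (@addrI _ (star y)); rewrite -starD !subrr star0.
Qed.
Lemma star1 : star 1 = 1.
Proof. by rewrite -[star 1]mulr1 -{2}(starK 1) -starM mulr1 starK. Qed.

Lemma group_inverse_star h w :
  group_inverse h w -> group_inverse (star h) (star w).
Proof. by case=> hw hwh whw; split; rewrite -!starM ?mulrA ?hwh ?whw ?hw. Qed.

Lemma group_inverse_hermitian h w :
  star h = h -> group_inverse h w -> star w = w.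
Proof.
move=> sh g; apply: (group_inverse_uniq _ g).
by rewrite -{1}sh; exact: group_inverse_star.
Qed.

Lemma MP_invertible_star a : MP_invertible star a -> MP_invertible star (star a).
Proof.
case=> x [axa xax sax sxa]; exists (star x); split.
- by rewrite -!starM mulrA axa.
- by rewrite -!starM mulrA xax.
- by rewrite -starM starK sxa.
- by rewrite -starM starK sax.
Qed.

Lemma group_invertible_gram a :
  MP_invertible star a -> group_invertible (star a * a).
Proof.
case=> x [axa xax sax sxa]; exists (x * star x).
have E1 : star a * a * x = star a by rewrite -mulrA -sax -starM axa.
have E2 : star a * star x = x * a by rewrite -starM sxa.
have E3 : star x * star a = a * x by rewrite -starM sax.
have hw : star a * a * (x * star x) = x * a by rewrite mulrA E1 E2.
have wh : x * star x * (star a * a) = x * a.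
  by rewrite -mulrA (mulrA (star x)) E3 axa.
split.
- by rewrite hw wh.
- by rewrite -mulrA wh mulrA E1.
- by rewrite wh mulrA xax.
Qed.

Section Reducing.
Hypothesis Hred : star_reducing star.

Lemma MP_invertible_of_gram a :
  group_invertible (star a * a) -> MP_invertible star a.
Proof.
case=> w g; set h := star a * a in g *.
have sh : star h = h by rewrite starM starK.
have sw : star w = w := group_inverse_hermitian sh g.
have [hw hwh whw] := g.
(* f is a hermitian idempotent with a^* (1 - f) a = 0, so (1 - f) a = 0. *)
set f := a * w * star a.
have ff : f * f = f by rewrite !mulrA -(mulrA (a * w)) -(mulrA a w h) -(mulrA a) whw.
have sf : star f = f by rewrite !starM starK sw mulrA.
have fa : f * a = a.
  have f'a : (1 - f) * a = 0.
    apply: Hred; rewrite starM starB star1 sf mulrA -(mulrA (star a)).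
    have -> : (1 - f) * (1 - f) = 1 - f by rewrite mulrBr mulr1 mulrBl mul1r ff subrr subr0.
    by rewrite mulrBr mulr1 mulrBl !mulrA -(mulrA (h * w)) hwh subrr.
  by apply/esym/eqP; rewrite -subr_eq0 -[X in X - _]mul1r -mulrBl f'a.
exists (w * star a); split.
- by rewrite mulrA fa.
- by rewrite -(mulrA w) mulrA whw.
- by rewrite mulrA sf.
- by rewrite -mulrA starM sh sw hw.
Qed.

Lemma MP_invertibleE a : MP_invertible star a <-> group_invertible (star a * a).
Proof. by split; [exact: group_invertible_gram | exact: MP_invertible_of_gram]. Qed.

Lemma group_invertible_cogram a :
  group_invertible (star a * a) -> group_invertible (a * star a).
Proof.
by move=> /MP_invertible_of_gram /MP_invertible_star /group_invertible_gram; rewrite starK.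
Qed.

End Reducing.
End Involution.

Section Projections.
Variables (R : pzRingType) (star : R -> R) (p q : R).
Hypothesis Hinv : is_involution star.
Hypotheses (Hp : projection star p) (Hq : projection star q).

Let pp : p * p = p := Hp.1.
Let qq : q * q = q := Hq.1.
Let sp : star p = p := Hp.2.
Let sq : star q = q := Hq.2.
Local Notation s := ((p - q) ^+ 2).

Lemma gram_sub : star (p - q) * (p - q) = s.
Proof. by rewrite (starB Hinv) sp sq expr2. Qed.

Lemma gram_commutator : star (p * q - q * p) * (p * q - q * p) = s * (1 - s).
Proof.
rewrite (starB Hinv) !(starM Hinv) sp sq -(opprB (p * q)) mulNr commutator_sqr //.
by rewrite opprK sqr_sub_compl.
Qed.

Lemma proj_sandwich : q * p * q = q * (1 - s).
Proof. by rewrite mulrBr mulr1 mulr_sqr_sub // mulrBr mulr1 mulrBl qq subKr. Qed.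

Lemma gram_mul : star (p * q) * (p * q) = q * (1 - s).
Proof. by rewrite (starM Hinv) sp sq mulrA -(mulrA q p p) pp proj_sandwich. Qed.

Lemma gram_compl_mul :
  star ((1 - q) * (p * q)) * ((1 - q) * (p * q)) = q * (s * (1 - s)).
Proof.
rewrite !(starM Hinv) (starB Hinv) (star1 Hinv) sp sq.
have -> : q * p * (1 - q) * ((1 - q) * (p * q)) = q * p * (1 - q) * p * q.
  by rewrite !mulrA -(mulrA (q * p)) idem_compl.
rewrite idem_sandwich_compl // proj_sandwich idem_mul_sub_sqr //; last first.
  by rewrite mulrBr mulrBl mulr1 mul1r sqr_sub_commute.
by rewrite subKr; congr (_ * _); rewrite mulrBl mulrBr mul1r mulr1.
Qed.

Lemma cogram_compl_mul :
  (1 - q) * (p * q) * star ((1 - q) * (p * q)) = (1 - q) * (s * (1 - s)).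
Proof.
rewrite !(starM Hinv) (starB Hinv) (star1 Hinv) sp sq.
have -> : (1 - q) * (p * q) * (q * p * (1 - q)) =
    (1 - q) * p * (1 - (1 - q)) * p * (1 - q).
  by rewrite subKr !mulrA -(mulrA _ q q) qq.
rewrite idem_sandwich_compl ?idem_compl // -mulr_compl_sqr_sub //.
rewrite idem_mul_sub_sqr ?idem_compl //.
by rewrite mulr_compl_sqr_sub // sqr_sub_mulr_compl.
Qed.

Hypothesis Hred : star_reducing star.

Lemma group_invertible_gram_commutator :
  group_invertible (s * (1 - s)) <->
  group_invertible (q * (1 - s)) /\ group_invertible s.
Proof.
have qs : q * s = s * q := sqr_sub_commute pp qq.
have qs' : q * (1 - s) = (1 - s) * q by rewrite mulrBr mulrBl mulr1 mul1r qs.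
have ss' : s * (1 - s) = (1 - s) * s by rewrite mulrBr mulrBl mulr1 mul1r.
have gq : group_invertible q by exists q; exact: group_inverse_idem.
split=> [gss' | [gqs' gs]].
  split; last exact: group_invertible_mull_compl (subrKC s 1) gss'.
  apply: group_invertibleM qs' gq _.
  by apply: (group_invertible_mull_compl (subrK s 1)); rewrite -ss'.
have gqss' : group_invertible (q * (s * (1 - s))).
  rewrite mulrA qs -mulrA; apply: group_invertibleM gs gqs'.
  by rewrite mulrA -qs -mulrA ss' mulrA.
apply: (group_invertible_corners qq _ gqss').
  by rewrite mulrA qs -mulrA qs' mulrA.
rewrite -cogram_compl_mul; apply: group_invertible_cogram => //.
by rewrite gram_compl_mul.
Qed.

End Projections.

Theorem theorem2p13 (R : pzRingType) (star : R -> R)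
  (Hinv : is_involution star) (Hred : star_reducing star)
  (p q : R) (Hp : projection star p) (Hq : projection star q) :
  MP_invertible star (p * q - q * p) <->
  (MP_invertible star (p * q) /\ MP_invertible star (p - q)).
Proof.
have MPE := MP_invertibleE Hinv Hred.
have key := group_invertible_gram_commutator Hinv Hp Hq Hred.
have gc := gram_commutator Hinv Hp Hq.
have gm := gram_mul Hinv Hp Hq.
have gd := gram_sub Hinv Hp Hq.
split=> [/MPE | [/MPE + /MPE]].
  by rewrite gc => /key[gqs gs]; split; apply/MPE; rewrite ?gm ?gd.
by rewrite gm gd => gqs gs; apply/MPE; rewrite gc; apply/key.
Qed.
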